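(* Let $\Omega\subseteq\mathbb{R}^2$ be open and connected. Let $R\in C^2(\Omega;SO(2))$ and $\alpha\in\mathbb{R}^2$ be such that $\operatorname{curl} R=\alpha$ in $\Omega$. Then $R$ is constant.
   Context: $SO(2)$ is the group of $2\times2$ rotation matrices. For a vector field $f=(f_1,f_2)$ on a subset of $\mathbb{R}^2$, $\operatorname{curl} f=\partial_1 f_2-\partial_2 f_1$; for a matrix field $R$, $\operatorname{curl}R\in\mathbb{R}^2$ is obtained by applying $\operatorname{curl}$ to each row, i.e. $(\operatorname{curl}R)_i=\partial_1R_{i2}-\partial_2R_{i1}$. *)

From HB Require Import structures.
From mathcomp Require Import all_boot all_order all_algebra.
From mathcomp Require Import all_classical all_reals all_analysis.
Set Implicit Arguments. Unset Strict Implicit. Unset Printing Implicit Defensive.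
Import Order.TTheory GRing.Theory Num.Theory.
Import numFieldNormedType.Exports.
Local Open Scope classical_set_scope.
Local Open Scope ring_scope.

(* Points of R^2 are row vectors 'rV[R]_2; coordinates x 0 0 and x 0 1. *)

(* i-th standard basis vector of R^2 (0-indexed: i = 0 is x_1, i = 1 is x_2). *)
Definition ebase {R : realType} (i : 'I_2) : 'rV[R]_2 := delta_mx 0 i.

Definition partial {R : realType} (i : 'I_2) (f : 'rV[R]_2 -> R) : 'rV[R]_2 -> R :=
  fun x => 'D_(ebase i) f x.

Definition C2_on {R : realType} (O : set 'rV[R]_2) (f : 'rV[R]_2 -> R) : Prop :=
  (forall x, O x -> differentiable f x) /\
  (forall i x, O x -> differentiable (partial i f) x) /\
  (forall i j x, O x -> {for x, continuous (partial j (partial i f))}).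

Definition SO2 {R : realType} (M : 'M[R]_2) : Prop :=
  M^T *m M = 1%:M /\ \det M = 1.

(* row-wise curl of a matrix field: (curl Rf)_i = d_1 Rf_{i2} - d_2 Rf_{i1}
   (0-indexed: partial 0 of entry (i,1) minus partial 1 of entry (i,0)). *)
Definition curl_mx {R : realType} (Rf : 'rV[R]_2 -> 'M[R]_2) (i : 'I_2)
  (x : 'rV[R]_2) : R :=
  partial 0 (fun y => Rf y i 1) x - partial 1 (fun y => Rf y i 0) x.

From HB Require Import structures.
From mathcomp Require Import all_boot all_order all_algebra.
From mathcomp Require Import all_classical all_reals all_analysis.
From mathcomp Require Import ring.
Set Implicit Arguments. Unset Strict Implicit. Unset Printing Implicit Defensive.
Import Order.TTheory GRing.Theory Num.Theory.
Import numFieldNormedType.Exports.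
Local Open Scope classical_set_scope.
Local Open Scope ring_scope.

(* Write R = [[a, -b], [b, a]] with a^2 + b^2 = 1.  Differentiating a^2 + b^2 = 1
   gives d_i a = l_i b and d_i b = - l_i a for some 1-form l, and the two curl
   equations identify l = (p a + q b, q a - p b) where alpha = (p, q).  Symmetry of
   the mixed second derivatives of a and b forces d_2 l_1 = d_1 l_2, whereas the
   formula for l gives d_2 l_1 - d_1 l_2 = - |l|^2 = - |alpha|^2.  Hence alpha = 0,
   a and b have vanishing gradients, and R is constant on the connected set. *)

Lemma MVT_is_derive (R : realType) (f df : R -> R) (a b : R) : a <= b ->
  (forall t, a <= t <= b -> is_derive t 1 f (df t)) ->
  exists2 c, a <= c <= b & f b - f a = df c * (b - a).
Proof.
move=> ab fdf; have [||c cab fdfc] := @MVT_segment R f df a b ab.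
- by move=> t; rewrite in_itv /= => /andP[ta tb]; apply: fdf; rewrite !ltW.
- apply: continuous_in_subspaceT => t; rewrite inE /= in_itv /= => tab.
  have [fd _] := fdf t tab.
  exact/differentiable_continuous/derivable1_diffP.
- by move: cab; rewrite in_itv /= => cab; exists c.
Qed.

Lemma connected_locally_constant (T : topologicalType) (U : Type) (f : T -> U)
    (O : set T) : open O -> connected O ->
  (forall z, O z -> \forall w \near z, f w = f z) ->
  forall y z, O y -> O z -> f z = f y.
Proof.
move=> oO cO lc y z Oy Oz.
have open_level (P : U -> Prop) : open [set w | O w /\ P (f w)].
  rewrite openE => w [Ow Pw].
  apply: filterS (filterI (open_nbhs_nbhs (conj oO Ow)) (lc w Ow)).
  by move=> u [Ou fu]; rewrite /= fu.
have B_O : [set w | O w /\ f w = f y] = O.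
  apply: cO; first by exists y.
    exists [set w | O w /\ f w = f y]; first exact: (open_level (fun v => v = f y)).
    by rewrite setIidr // => w [].
  exists (~` [set w | O w /\ f w <> f y]).
    exact/open_closedC/(open_level (fun v => v <> f y)).
  apply/seteqP; split=> [w [Ow fw]|w [Ow nfw]]; first by split=> // -[].
  by split=> //; apply: contrapT => fwy; exact: nfw.
by have [] : [set w | O w /\ f w = f y] z by rewrite B_O.
Qed.

Section DirectionalCalculus.
Variables (R : realType) (V : normedModType R).
Implicit Types (f : V -> R) (x v w : V).

Lemma is_derive_line f x v (t : R) : differentiable f (x + t *: v) ->
  is_derive t 1 (fun s => f (x + s *: v)) ('D_v f (x + t *: v)).
Proof.
move=> df.
have shift_line : (fun h : R => h^-1 *: (f (x + (h *: 1 + t) *: v) - f (x + t *: v))) =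
    (fun h : R => h^-1 *: (f (h *: v + (x + t *: v)) - f (x + t *: v))).
  apply/funext => h; congr (_ *: (f _ - _)).
  by rewrite -[h *: 1]/(h * 1) mulr1 scalerDl addrCA.
split; first by rewrite /derivable /= shift_line; exact: diff_derivable.
by rewrite /derive /= shift_line.
Qed.

Lemma MVT_line f x v (a b : R) : a <= b ->
  (forall t, a <= t <= b -> differentiable f (x + t *: v)) ->
  exists2 c, a <= c <= b &
    f (x + b *: v) - f (x + a *: v) = 'D_v f (x + c *: v) * (b - a).
Proof.
move=> ab df; apply: (@MVT_is_derive _ (fun s => f (x + s *: v))) => // t tab.
exact/is_derive_line/df.
Qed.

Definition second_difference f x v w (h : R) :=
  f (x + h *: v + h *: w) - f (x + h *: v) - f (x + h *: w) + f x.

Lemma second_differenceC f x v w (h : R) :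
  second_difference f x v w h = second_difference f x w v h.
Proof. by rewrite /second_difference [x + h *: w + _]addrAC; ring. Qed.

Lemma second_difference_mean_value f x v w (h : R) : 0 <= h ->
  (forall s u, 0 <= s <= h -> 0 <= u <= h ->
     differentiable f (x + s *: v + u *: w) /\
     differentiable ('D_v f) (x + s *: v + u *: w)) ->
  exists s u, [/\ 0 <= s <= h, 0 <= u <= h &
    second_difference f x v w h = 'D_w ('D_v f) (x + s *: v + u *: w) * h ^+ 2].
Proof.
move=> h0 D.
have hh : 0 <= h <= h by rewrite h0 lexx.
have h00 : (0 : R) <= 0 <= h by rewrite h0 lexx.
have [t th|s sh Ds] := @MVT_is_derive _
  (fun t => f (x + h *: w + t *: v) - f (x + t *: v))
  (fun t => 'D_v f (x + h *: w + t *: v) - 'D_v f (x + t *: v)) 0 h h0.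
  apply: is_deriveB; apply: is_derive_line.
    by rewrite addrAC; exact: (D t h th hh).1.
  by have [+ _] := D t 0 th h00; rewrite scale0r addr0.
have [u uh Du] := MVT_line h0 (fun u uh => (D s u sh uh).2).
exists s, u; split => //.
move: Ds Du; rewrite !scale0r !addr0 !subr0 ![x + h *: w + _]addrAC => Ds Du.
by rewrite /second_difference expr2 mulrA -Du -Ds; ring.
Qed.

Lemma ball_parallelogram x v w (r h s u : R) : h * (`|v| + `|w|) < r ->
  0 <= s <= h -> 0 <= u <= h -> ball x r (x + s *: v + u *: w).
Proof.
move=> hr /andP[s0 sh] /andP[u0 uh].
rewrite -ball_normE /= -addrA opprD addrA subrr add0r normrN.
apply: le_lt_trans hr; rewrite mulrDr.
apply: (le_trans (ler_normD _ _)); rewrite !normrZ !ger0_norm //.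
by apply: lerD; apply: ler_wpM2r.
Qed.

Lemma second_difference_cvg f x v w :
  (\forall z \near x, differentiable f z /\ differentiable ('D_v f) z) ->
  {for x, continuous ('D_w ('D_v f))} ->
  (fun h => second_difference f x v w h / h ^+ 2) @ 0^'+ --> 'D_w ('D_v f) x.
Proof.
move=> D c; apply/cvgrPdist_lt => e e0.
have /nbhs_ballP[r r0 Dr] : \forall z \near x, (differentiable f z /\
    differentiable ('D_v f) z) /\ `|'D_w ('D_v f) x - 'D_w ('D_v f) z| < e.
  by apply: filterI D _; move/cvgrPdist_lt : c; apply.
have M0 : 0 < `|v| + `|w| + 1 by rewrite ltr_wpDl ?addr_ge0.
near=> h.
have h0 : 0 < h by near: h; exact: nbhs_right_gt.
have hr : h * (`|v| + `|w|) < r.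
  have : h < r / (`|v| + `|w| + 1) by near: h; apply: nbhs_right_lt; rewrite divr_gt0.
  rewrite ltr_pdivlMr // => /(le_lt_trans _); apply.
  by rewrite ler_pM2l // lerDl.
have [s [u [sh uh ->]]] := second_difference_mean_value (ltW h0)
  (fun s u sh uh => (Dr _ (ball_parallelogram x hr sh uh)).1).
rewrite mulfK ?expf_neq0 ?gt_eqF //.
exact: (Dr _ (ball_parallelogram x hr sh uh)).2.
Unshelve. all: by end_near.
Qed.

Lemma derive_comm f x v w :
  (\forall z \near x, [/\ differentiable f z, differentiable ('D_v f) z
                        & differentiable ('D_w f) z]) ->
  {for x, continuous ('D_w ('D_v f))} -> {for x, continuous ('D_v ('D_w f))} ->
  'D_w ('D_v f) x = 'D_v ('D_w f) x.
Proof.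
move=> D cvw cwv.
have Dv : \forall z \near x, differentiable f z /\ differentiable ('D_v f) z.
  by apply: filterS D => z [].
have Dw : \forall z \near x, differentiable f z /\ differentiable ('D_w f) z.
  by apply: filterS D => z [].
apply: (cvg_unique (@Rhausdorff R) (second_difference_cvg Dv cvw)).
rewrite (_ : (fun h => _) = fun h => second_difference f x w v h / h ^+ 2).
  exact: second_difference_cvg Dw cwv.
by apply/funext => h; rewrite second_differenceC.
Qed.

Lemma derive0_locally_constant f (O : set V) z : open O -> O z ->
  (forall p, O p -> differentiable f p /\ forall v, 'D_v f p = 0) ->
  \forall w \near z, f w = f z.
Proof.
move=> oO Oz D; have /nbhs_ballP[r r0 zrO] := open_nbhs_nbhs (conj oO Oz).
apply/nbhs_ballP; exists r => // w zw.
have seg t : 0 <= t <= 1 -> O (z + t *: (w - z)).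
  move=> /andP[t0 t1]; apply: zrO; move: zw; rewrite -!ball_normE /=.
  rewrite opprD addrA subrr sub0r normrN normrZ ger0_norm // -opprB normrN.
  by apply: le_lt_trans; rewrite ler_piMl.
have [c c01] := MVT_line ler01 (fun t t01 => (D _ (seg t t01)).1).
rewrite scale1r scale0r addr0 subrKC (D _ (seg c c01)).2 mul0r.
by move/eqP; rewrite subr_eq0 => /eqP.
Qed.

End DirectionalCalculus.

Section PartialDerivatives.
Variables (R : realType) (i : 'I_2) (x : 'rV[R]_2).
Implicit Types f g : 'rV[R]_2 -> R.

Lemma near_eq_partial f g : (\forall y \near x, f y = g y) ->
  partial i f x = partial i g x.
Proof. exact: near_eq_derive. Qed.

Lemma partialN f : differentiable f x -> partial i (- f) x = - partial i f x.
Proof. by move=> df; apply: deriveN; exact: diff_derivable. Qed.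

Lemma partialD f g : differentiable f x -> differentiable g x ->
  partial i (f + g) x = partial i f x + partial i g x.
Proof. by move=> df dg; apply: deriveD; exact: diff_derivable. Qed.

Lemma partialB f g : differentiable f x -> differentiable g x ->
  partial i (f - g) x = partial i f x - partial i g x.
Proof. by move=> df dg; apply: deriveB; exact: diff_derivable. Qed.

Lemma partialZ (k : R) f : differentiable f x ->
  partial i (k *: f) x = k * partial i f x.
Proof. by move=> df; apply: deriveZ; exact: diff_derivable. Qed.

Lemma partialM f g : differentiable f x -> differentiable g x ->
  partial i (f * g) x = f x * partial i g x + g x * partial i f x.
Proof. by move=> df dg; apply: deriveM; exact: diff_derivable. Qed.

End PartialDerivatives.

Lemma partials_eq0_derive (R : realType) (f : 'rV[R]_2 -> R) (x : 'rV[R]_2) :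
  differentiable f x -> (forall i, partial i f x = 0) -> forall v, 'D_v f x = 0.
Proof.
move=> df f'0 v; rewrite deriveE // (row_sum_delta v) linear_sum big1 // => i _.
by rewrite linearZ /= -deriveE // (f'0 i : 'D_(delta_mx 0 i) f x = 0) scaler0.
Qed.

Lemma ord2_cases (i : 'I_2) : i = 0 \/ i = 1.
Proof. by case: i => -[|[|//]] i2; [left | right]; apply: val_inj. Qed.

Lemma det_mx2 (R : comRingType) (M : 'M[R]_2) :
  \det M = M 0 0 * M 1 1 - M 0 1 * M 1 0.
Proof.
rewrite (expand_det_row _ 0) !big_ord_recl big_ord0 /cofactor !det_mx11 !mxE /=.
have -> : lift (0 : 'I_2) (0 : 'I_1) = 1 by apply/val_inj.
have -> : lift (1 : 'I_2) (0 : 'I_1) = 0 by apply/val_inj.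
by rewrite expr0 expr1 /=; ring.
Qed.

Lemma sqr_add_eq0 (R : realDomainType) (x y : R) :
  x ^+ 2 + y ^+ 2 = 0 -> x = 0 /\ y = 0.
Proof.
by move/eqP; rewrite paddr_eq0 ?sqr_ge0 // !sqrf_eq0 => /andP[/eqP-> /eqP->].
Qed.

Lemma SO2_entries (R : realType) (M : 'M[R]_2) : SO2 M ->
  [/\ M 1 1 = M 0 0, M 0 1 = - M 1 0 & M 0 0 ^+ 2 + M 1 0 ^+ 2 = 1].
Proof.
case=> MTM detM; rewrite det_mx2 in detM.
have e i j : (M^T *m M) i j = (1%:M : 'M[R]_2) i j by rewrite MTM.
have := e 0 0; have := e 1 1; rewrite !mxE !big_ord_recl !big_ord0 !mxE /=.
have -> : lift (0 : 'I_2) (0 : 'I_1) = 1 by apply/val_inj.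
rewrite !addr0 => col1 col0.
have : (M 1 1 - M 0 0) ^+ 2 + (M 0 1 + M 1 0) ^+ 2 = 0.
  transitivity ((M 0 0 * M 0 0 + M 1 0 * M 1 0) + (M 0 1 * M 0 1 + M 1 1 * M 1 1)
    - 2 * (M 0 0 * M 1 1 - M 0 1 * M 1 0)); first by ring.
  by rewrite col0 col1 detM; ring.
move=> /sqr_add_eq0[/subr0_eq -> /eqP]; rewrite addr_eq0 => /eqP ->.
by split; rewrite // -expr2 in col0.
Qed.

Lemma SO2_eq (R : realType) (M N : 'M[R]_2) : SO2 M -> SO2 N ->
  M 0 0 = N 0 0 -> M 1 0 = N 1 0 -> M = N.
Proof.
move=> /SO2_entries[M11 M01 _] /SO2_entries[N11 N01 _] e00 e10.
apply/matrixP => i j.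
by case: (ord2_cases i) => ->; case: (ord2_cases j) => ->;
  rewrite ?M11 ?N11 ?M01 ?N01 ?e00 ?e10.
Qed.

Lemma unit_orthogonal (R : comRingType) (a b x y : R) :
  a ^+ 2 + b ^+ 2 = 1 -> a * x + b * y = 0 ->
  x = (b * x - a * y) * b /\ y = - ((b * x - a * y) * a).
Proof.
move=> ab1 ab_xy; split.
  transitivity (x * (a ^+ 2 + b ^+ 2)); first by rewrite ab1 mulr1.
  transitivity ((b * x - a * y) * b + a * (a * x + b * y)); first by ring.
  by rewrite ab_xy mulr0 addr0.
transitivity (y * (a ^+ 2 + b ^+ 2)); first by rewrite ab1 mulr1.
transitivity (- ((b * x - a * y) * a) + b * (a * x + b * y)); first by ring.
by rewrite ab_xy mulr0 addr0.
Qed.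

Section RotationForm.
Variables (R : realType) (a b : 'rV[R]_2 -> R) (l : 'I_2 -> 'rV[R]_2 -> R).
Variable x : 'rV[R]_2.
Hypotheses (a_diff : differentiable a x) (b_diff : differentiable b x).
Hypothesis l_diff : forall i, differentiable (l i) x.
Hypothesis partial_a : forall i, \forall y \near x, partial i a y = l i y * b y.
Hypothesis partial_b : forall i, \forall y \near x, partial i b y = - (l i y * a y).

Lemma partial_partial_a i j :
  partial j (partial i a) x = b x * partial j (l i) x - l i x * l j x * a x.
Proof.
rewrite (near_eq_partial (g := l i * b) _ (partial_a i)) partialM //.
by rewrite (nbhs_singleton (partial_b j)); ring.
Qed.

Lemma partial_partial_b i j :
  partial j (partial i b) x = - (a x * partial j (l i) x) - l i x * l j x * b x.
Proof.
rewrite (near_eq_partial (g := - (l i * a)) _ (partial_b i)).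
rewrite partialN ?partialM //; last exact: differentiableM.
by rewrite (nbhs_singleton (partial_a j)); ring.
Qed.

Lemma rotation_form_closed : a x ^+ 2 + b x ^+ 2 = 1 ->
  partial 0 (partial 1 a) x = partial 1 (partial 0 a) x ->
  partial 0 (partial 1 b) x = partial 1 (partial 0 b) x ->
  partial 1 (l 0) x = partial 0 (l 1) x.
Proof.
rewrite !partial_partial_a !partial_partial_b => ab1 Sa Sb.
apply/eqP; rewrite -subr_eq0 -[_ - _]mul1r -ab1.
set d1 := partial 1 (l 0) x; set d0 := partial 0 (l 1) x.
have -> : (a x ^+ 2 + b x ^+ 2) * (d1 - d0) =
    a x * ((- (a x * d0) - l 1 x * l 0 x * b x) - (- (a x * d1) - l 0 x * l 1 x * b x))
  - b x * ((b x * d0 - l 1 x * l 0 x * a x) - (b x * d1 - l 0 x * l 1 x * a x)).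
  by ring.
by rewrite Sa Sb !subrr !mulr0 subrr.
Qed.

End RotationForm.

Lemma partials_eq0_constant (R : realType) (f : 'rV[R]_2 -> R) (O : set 'rV[R]_2) :
  open O -> connected O ->
  (forall x, O x -> differentiable f x /\ forall i, partial i f x = 0) ->
  forall y z, O y -> O z -> f z = f y.
Proof.
move=> oO cO f'0; apply: connected_locally_constant => // z Oz.
apply: derive0_locally_constant oO Oz _ => x Ox; have [df f'x0] := f'0 x Ox.
by split => //; exact: partials_eq0_derive.
Qed.

Section CurlOfRotationField.
Variables (R : realType) (Omega : set 'rV[R]_2) (a b : 'rV[R]_2 -> R) (p q : R).
Hypothesis Omega_open : open Omega.
Hypotheses (a_C2 : C2_on Omega a) (b_C2 : C2_on Omega b).
Hypothesis ab_unit : forall x, Omega x -> a x ^+ 2 + b x ^+ 2 = 1.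
Hypothesis curl_p : forall x, Omega x -> - partial 0 b x - partial 1 a x = p.
Hypothesis curl_q : forall x, Omega x -> partial 0 a x - partial 1 b x = q.

Let l (i : 'I_2) : 'rV[R]_2 -> R :=
  if i == 0 then p *: a + q *: b else q *: a - p *: b.

Let l0E x : l 0 x = p * a x + q * b x. Proof. by []. Qed.
Let l1E x : l 1 x = q * a x - p * b x. Proof. by []. Qed.

Lemma ab_orthogonal x i : Omega x -> a x * partial i a x + b x * partial i b x = 0.
Proof.
move=> Ox; have da := a_C2.1 x Ox; have db := b_C2.1 x Ox.
have : partial i (a * a + b * b) x = 0.
  rewrite (near_eq_partial (g := cst 1) i); first exact: derive_cst.
  apply: filterS (open_nbhs_nbhs (conj Omega_open Ox)) => y Oy.
  by rewrite !fctE -!expr2 ab_unit.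
rewrite partialD ?partialM //; try exact: differentiableM.
have two0 : (2 : R) != 0 by rewrite pnatr_eq0.
by move=> h; apply: (mulfI two0); rewrite mulr0 -h; ring.
Qed.

Lemma l_eq x i : Omega x -> l i x = b x * partial i a x - a x * partial i b x.
Proof.
move=> Ox; have o0 := ab_orthogonal 0 Ox; have o1 := ab_orthogonal 1 Ox.
case: (ord2_cases i) => ->; rewrite ?l0E ?l1E -(curl_p Ox) -(curl_q Ox).
  transitivity (b x * partial 0 a x - a x * partial 0 b x
    - (a x * partial 1 a x + b x * partial 1 b x)); first by ring.
  by rewrite o1 subr0.
transitivity (b x * partial 1 a x - a x * partial 1 b x
  + (a x * partial 0 a x + b x * partial 0 b x)); first by ring.
by rewrite o0 addr0.
Qed.

Lemma partial_a_rot x i : Omega x -> partial i a x = l i x * b x.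
Proof.
move=> Ox; rewrite l_eq //.
exact: (unit_orthogonal (ab_unit Ox) (ab_orthogonal i Ox)).1.
Qed.

Lemma partial_b_rot x i : Omega x -> partial i b x = - (l i x * a x).
Proof.
move=> Ox; rewrite l_eq //.
exact: (unit_orthogonal (ab_unit Ox) (ab_orthogonal i Ox)).2.
Qed.

Lemma l_diff x i : Omega x -> differentiable (l i) x.
Proof.
move=> Ox; have da := a_C2.1 x Ox; have db := b_C2.1 x Ox.
rewrite /l; case: ifP => _; [apply: differentiableD | apply: differentiableB];
  exact: differentiableZ.
Qed.

Lemma partial_l x : Omega x ->
  partial 1 (l 0) x = - l 1 x ^+ 2 /\ partial 0 (l 1) x = l 0 x ^+ 2.
Proof.
move=> Ox; have da := a_C2.1 x Ox; have db := b_C2.1 x Ox.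
rewrite {1 3}/l /= partialD ?partialB ?partialZ //; try exact: differentiableZ.
by rewrite !partial_a_rot // !partial_b_rot // !l0E !l1E; split; ring.
Qed.

Lemma curl_rotation_eq0 : (exists x, Omega x) -> p = 0 /\ q = 0.
Proof.
case=> x Ox; have Ox_near := open_nbhs_nbhs (conj Omega_open Ox).
have C2_near f : C2_on Omega f -> \forall z \near x,
    [/\ differentiable f z, differentiable (partial 0 f) z
      & differentiable (partial 1 f) z].
  by case=> df [d'f _]; apply: filterS Ox_near => z Oz; split; [exact: df|exact: d'f..].
have Sa : partial 0 (partial 1 a) x = partial 1 (partial 0 a) x :=
  esym (derive_comm (C2_near a a_C2) (a_C2.2.2 0 1 x Ox) (a_C2.2.2 1 0 x Ox)).
have Sb : partial 0 (partial 1 b) x = partial 1 (partial 0 b) x :=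
  esym (derive_comm (C2_near b b_C2) (b_C2.2.2 0 1 x Ox) (b_C2.2.2 1 0 x Ox)).
have near_a i : \forall y \near x, partial i a y = l i y * b y.
  by apply: filterS Ox_near => y; exact: partial_a_rot.
have near_b i : \forall y \near x, partial i b y = - (l i y * a y).
  by apply: filterS Ox_near => y; exact: partial_b_rot.
have := rotation_form_closed (a_C2.1 x Ox) (b_C2.1 x Ox) (fun i => l_diff i Ox)
  near_a near_b (ab_unit Ox) Sa Sb.
have [-> ->] := partial_l Ox => l_sq.
have : p ^+ 2 + q ^+ 2 = l 0 x ^+ 2 + l 1 x ^+ 2.
  rewrite -[LHS]mulr1 -(ab_unit Ox).
  by rewrite l0E l1E; ring.
by rewrite -l_sq addNr; exact: sqr_add_eq0.
Qed.

Lemma rotation_field_constant : connected Omega ->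
  forall x0 x, Omega x0 -> Omega x -> a x = a x0 /\ b x = b x0.
Proof.
move=> cO x0 x Ox0 Ox; have [p0 q0] := curl_rotation_eq0 (ex_intro _ x0 Ox0).
have l0 y i : l i y = 0.
  by case: (ord2_cases i) => ->; rewrite ?l0E ?l1E p0 q0 !mul0r ?subr0 ?addr0.
split; apply: partials_eq0_constant Omega_open cO _ x0 x Ox0 Ox => y Oy.
  by split=> [|i]; [exact: a_C2.1 | rewrite partial_a_rot // l0 mul0r].
by split=> [|i]; [exact: b_C2.1 | rewrite partial_b_rot // l0 mul0r oppr0].
Qed.

End CurlOfRotationField.

Lemma curl_mx_SO2 (R : realType) (Omega : set 'rV[R]_2) (Rf : 'rV[R]_2 -> 'M[R]_2)
    (x : 'rV[R]_2) :
  open Omega -> (forall y, Omega y -> SO2 (Rf y)) -> Omega x ->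
  differentiable (fun y => Rf y 1 0) x ->
  curl_mx Rf 0 x = - partial 0 (fun y => Rf y 1 0) x - partial 1 (fun y => Rf y 0 0) x /\
  curl_mx Rf 1 x = partial 0 (fun y => Rf y 0 0) x - partial 1 (fun y => Rf y 1 0) x.
Proof.
move=> oO SO Ox db; have Ox_near := open_nbhs_nbhs (conj oO Ox).
rewrite /curl_mx; split; congr (_ - _).
  rewrite -partialN // (near_eq_partial 0 (g := - (fun y => Rf y 1 0))) //.
  by apply: filterS Ox_near => y /SO/SO2_entries[].
by apply: near_eq_partial; apply: filterS Ox_near => y /SO/SO2_entries[].
Qed.

Theorem theorem3p1 (R : realType) (Omega : set 'rV[R]_2)
  (Rf : 'rV[R]_2 -> 'M[R]_2) (alpha : 'I_2 -> R) :
  open Omega -> connected Omega ->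
  (forall i j, C2_on Omega (fun x => Rf x i j)) ->
  (forall x, Omega x -> SO2 (Rf x)) ->
  (forall i x, Omega x -> curl_mx Rf i x = alpha i) ->
  exists R0 : 'M[R]_2, forall x, Omega x -> Rf x = R0.
Proof.
move=> oO cO C2 SO curl.
have [[x0 Ox0]|Omega0] := pselect (exists x, Omega x); last first.
  by exists 0 => x Ox; case: Omega0; exists x.
have curl_eq x (Ox : Omega x) := curl_mx_SO2 oO SO Ox ((C2 1 0).1 x Ox).
have ab_unit x : Omega x -> Rf x 0 0 ^+ 2 + Rf x 1 0 ^+ 2 = 1.
  by move=> Ox; have [] := SO2_entries (SO x Ox).
have curl_p x : Omega x ->
    - partial 0 (fun y => Rf y 1 0) x - partial 1 (fun y => Rf y 0 0) x = alpha 0.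
  by move=> Ox; rewrite -(curl 0 x Ox) (curl_eq x Ox).1.
have curl_q x : Omega x ->
    partial 0 (fun y => Rf y 0 0) x - partial 1 (fun y => Rf y 1 0) x = alpha 1.
  by move=> Ox; rewrite -(curl 1 x Ox) (curl_eq x Ox).2.
have ab_const := rotation_field_constant oO (C2 0 0) (C2 1 0) ab_unit curl_p curl_q cO Ox0.
exists (Rf x0) => x Ox; have [a_eq b_eq] := ab_const x Ox.
exact: SO2_eq (SO x Ox) (SO x0 Ox0) a_eq b_eq.
Qed.
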